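(* Let $d\ge 2$ and $n\ge1$ be integers, let $\mathcal{S}^*\subseteq\{1,\dots,d\}$, let $a_{1:n}\in(\{0,1\}^d)^n$ be arbitrary, and let $x_t:=h_{\mathcal{S}^*}(a_t)$ for $t=1,\dots,n$. Then the cumulative log-loss of the predictor $\zeta_d$ satisfies $\mathcal{L}_n(\zeta_d)=-\log_2\prod_{t=1}^n\zeta_d(x_t\mid x_{<t};a_{1:t})\le 2d^2$.
   Context: For $\mathcal{S}\subseteq\{1,\dots,d\}$ and $a\in\{0,1\}^d$, $h_{\mathcal{S}}(a)=\bigwedge_{i\in\mathcal{S}}a^i$ (equal to $1$ if $\mathcal{S}=\emptyset$), where $a^i$ is the $i$-th component of $a$. The predictor $\zeta_d$ is defined as follows, with $\alpha:=2^{-d/2^d}$. At time $t$, let $\mathcal{A}_t:=\{a_\tau:\tau<t,\ x_\tau=0\}$ (the set of previously seen negative inputs) and, for $i=1,\dots,d$, let $w_i:=\prod_{\tau<t:\,x_\tau=1}a_\tau^i$ (equal to $1$ if there is no such $\tau$). If $a_t\in\mathcal{A}_t$, then $\zeta_d(0\mid x_{<t};a_{1:t})=1$ and $\zeta_d(1\mid x_{<t};a_{1:t})=0$. Otherwise $$\zeta_d(1\mid x_{<t};a_{1:t})=\prod_{i=1}^d\frac{(1-\alpha)+\alpha w_i a_t^i}{(1-\alpha)+\alpha w_i},\qquad \zeta_d(0\mid x_{<t};a_{1:t})=1-\zeta_d(1\mid x_{<t};a_{1:t}).$$ *)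

From Stdlib Require Import Reals List Bool Arith.
Import ListNotations.
Open Scope R_scope.

(* A point a in {0,1}^d is a function nat -> bool, read on indices 1..d.
   A sequence a_{1:n} is a function nat -> (nat -> bool), read on 1..n.
   A subset S of {1..d} is a predicate nat -> bool, read on 1..d. *)

Definition Rprod (l : list R) : R := fold_right Rmult 1 l.

Definition bitR (b : bool) : R := if b then 1 else 0.

Definition h (d : nat) (S : nat -> bool) (a : nat -> bool) : bool :=
  forallb (fun i => implb (S i) (a i)) (seq 1 d).

Definition vec_eqb (d : nat) (u v : nat -> bool) : bool :=
  forallb (fun i => Bool.eqb (u i) (v i)) (seq 1 d).

Definition inA (d : nat) (a : nat -> nat -> bool) (x : nat -> bool) (t : nat) : bool :=
  existsb (fun tau => negb (x tau) && vec_eqb d (a tau) (a t)) (seq 1 (t - 1)).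

Definition w (a : nat -> nat -> bool) (x : nat -> bool) (t i : nat) : R :=
  Rprod (map (fun tau => bitR (a tau i)) (filter x (seq 1 (t - 1)))).

Definition alpha (d : nat) : R := Rpower 2 (- INR d / 2 ^ d).

Definition zeta1 (d : nat) (a : nat -> nat -> bool) (x : nat -> bool) (t : nat) : R :=
  if inA d a x t then 0
  else Rprod (map (fun i =>
         ((1 - alpha d) + alpha d * w a x t i * bitR (a t i)) /
         ((1 - alpha d) + alpha d * w a x t i)) (seq 1 d)).

Definition zeta (d : nat) (a : nat -> nat -> bool) (x : nat -> bool) (t : nat) (b : bool) : R :=
  if b then zeta1 d a x t else 1 - zeta1 d a x t.

Definition log2 (y : R) : R := ln y / ln 2.

Definition zeta_prod (d n : nat) (a : nat -> nat -> bool) (x : nat -> bool) : R :=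
  Rprod (map (fun t => zeta d a x t (x t)) (seq 1 n)).

Definition logloss (d n : nat) (a : nat -> nat -> bool) (x : nat -> bool) : R :=
  - log2 (zeta_prod d n a x).

(* Call a coordinate i alive while w_i = 1, and a negative round fresh when its
   input was not seen negative before.  The potential
     Phi_T = (1 - alpha)^(#dead coordinates) * alpha^(#fresh negatives)
   satisfies Phi_(T+1) <= Phi_T * zeta(x_(T+1)), so it bounds the product from
   below: a positive round kills k coordinates and has probability exactly
   (1 - alpha)^k, a repeated negative has probability 1, and a fresh negative
   has probability 1 - (1 - alpha)^k >= alpha because realizability forces it to
   kill some alive coordinate of S*.  Fresh negatives have distinct inputs, so
   there are at most 2^d of them, whence the product is at least
   (1 - alpha)^d * alpha^(2^d) = (1 - alpha)^d * 2^(-d); with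
   1 - alpha >= 2^(1-2d) this is at least 2^(-2d^2). *)

From Stdlib Require Import Reals List Bool Lia Lra.
Import ListNotations.
Open Scope R_scope.

Lemma Rprod_app l1 l2 : Rprod (l1 ++ l2) = Rprod l1 * Rprod l2.
Proof. induction l1 as [|y l1 IH]; simpl; [ring | rewrite IH; ring]. Qed.

Lemma Rprod_map_bitR {A} (f : A -> bool) l :
  Rprod (map (fun y => bitR (f y)) l) = bitR (forallb f l).
Proof.
  induction l as [|y l IH]; simpl; auto.
  rewrite IH. destruct (f y), (forallb f l); simpl; ring.
Qed.

Lemma Rprod_map_ratio (c : R) (p q : nat -> bool) l : 1 - c <> 0 ->
  Rprod (map (fun i => ((1 - c) + c * bitR (p i) * bitR (q i)) /
                       ((1 - c) + c * bitR (p i))) l) =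
  (1 - c) ^ length (filter (fun i => p i && negb (q i)) l).
Proof.
  intros Hc. induction l as [|i l IH]; simpl; auto.
  rewrite IH. destruct (p i), (q i); simpl; field; lra.
Qed.

Lemma length_filter_andb {A} (f g : A -> bool) l :
  length (filter f l) = (length (filter (fun y => f y && g y) l) +
                         length (filter (fun y => f y && negb (g y)) l))%nat.
Proof. induction l as [|y l IH]; simpl; auto. destruct (f y), (g y); simpl; lia. Qed.

Lemma pow_le_pow_le1 c m n : 0 <= c <= 1 -> (m <= n)%nat -> c ^ n <= c ^ m.
Proof.
  intros Hc Hmn. replace n with (m + (n - m))%nat by lia. rewrite pow_add.
  assert (0 <= c ^ m) by (apply pow_le; lra).
  assert (c ^ (n - m) <= 1) by (rewrite <- (pow1 (n - m)); apply pow_incr; lra).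
  nra.
Qed.

Lemma forallb_false_exists {A} (f : A -> bool) l :
  forallb f l = false -> exists y, In y l /\ f y = false.
Proof.
  induction l as [|y l IH]; simpl; [discriminate|]. intros E.
  destruct (f y) eqn:Hy; simpl in E; [|eauto].
  destruct (IH E) as [z [Hz Hfz]]. eauto.
Qed.

Fixpoint bool_lists (m : nat) : list (list bool) :=
  match m with
  | O => [[]]
  | S m => map (cons true) (bool_lists m) ++ map (cons false) (bool_lists m)
  end.

Lemma length_bool_lists m : length (bool_lists m) = (2 ^ m)%nat.
Proof. induction m; simpl; auto. rewrite length_app, !length_map. lia. Qed.

Lemma in_bool_lists m l : length l = m -> In l (bool_lists m).
Proof.
  revert l; induction m; intros [|b l] H; simpl in *; try lia; auto.
  apply in_or_app. destruct b; [left | right]; apply in_map; auto.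
Qed.

Lemma vec_eqb_map d u v :
  map u (seq 1 d) = map v (seq 1 d) -> vec_eqb d u v = true.
Proof.
  intros E. apply forallb_forall. intros i Hi.
  rewrite (ext_in_map E i Hi). apply Bool.eqb_reflx.
Qed.

Lemma h_vec_eqb d Sv u v : vec_eqb d u v = true -> h d Sv u = h d Sv v.
Proof.
  intros E. apply Bool.eq_iff_eq_true. unfold h. rewrite !forallb_forall.
  split; intros H i Hi; specialize (H i Hi);
    apply (proj1 (forallb_forall _ _) E), Bool.eqb_prop in Hi; congruence.
Qed.

Section Predictor.

Variables (d : nat) (a : nat -> nat -> bool) (x : nat -> bool).

Definition alive T i := forallb (fun tau => a tau i) (filter x (seq 1 T)).
Definition killed T i := alive T i && negb (a (S T) i).
Definition n_alive T := length (filter (alive T) (seq 1 d)).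
Definition n_killed T := length (filter (killed T) (seq 1 d)).

Definition fresh_neg t := negb (x t) && negb (inA d a x t).
Definition n_fresh T := length (filter fresh_neg (seq 1 T)).

Definition partial_prod T := Rprod (map (fun t => zeta d a x t (x t)) (seq 1 T)).

Lemma w_alive T i : w a x (S T) i = bitR (alive T i).
Proof. unfold w, alive. rewrite Nat.sub_succ, Nat.sub_0_r. apply Rprod_map_bitR. Qed.

Lemma zeta1_not_inA T : 1 - alpha d <> 0 -> inA d a x (S T) = false ->
  zeta1 d a x (S T) = (1 - alpha d) ^ n_killed T.
Proof.
  intros Hc HA. unfold zeta1, n_killed, killed. rewrite HA.
  rewrite <- (Rprod_map_ratio (alpha d) (alive T) (a (S T))) by exact Hc.
  f_equal. apply map_ext. intros i. rewrite w_alive. reflexivity.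
Qed.

Lemma alive_S T i :
  alive (S T) i = if x (S T) then alive T i && a (S T) i else alive T i.
Proof.
  unfold alive. rewrite seq_S, filter_app. simpl.
  destruct (x (S T)); simpl; rewrite forallb_app; simpl; rewrite ?andb_true_r; auto.
Qed.

Lemma n_alive_0 : n_alive 0 = d.
Proof. unfold n_alive. generalize 1%nat. induction d as [|k IH]; simpl; auto. Qed.

Lemma n_alive_le T : (n_alive T <= d)%nat.
Proof. unfold n_alive. rewrite <- (length_seq d 1) at 2. apply filter_length_le. Qed.

Lemma n_alive_pos T : x (S T) = true -> n_alive T = (n_alive (S T) + n_killed T)%nat.
Proof.
  intros Ht. unfold n_alive, n_killed, killed.
  rewrite (length_filter_andb (alive T) (a (S T))). f_equal. f_equal.
  apply filter_ext. intros i. rewrite alive_S, Ht. reflexivity.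
Qed.

Lemma n_alive_neg T : x (S T) = false -> n_alive (S T) = n_alive T.
Proof.
  intros Ht. unfold n_alive. f_equal. apply filter_ext. intros i.
  rewrite alive_S, Ht. reflexivity.
Qed.

Lemma n_fresh_S T :
  n_fresh (S T) = (n_fresh T + if fresh_neg (S T) then 1 else 0)%nat.
Proof.
  unfold n_fresh. rewrite seq_S, filter_app, length_app. simpl.
  destruct (fresh_neg (S T)); reflexivity.
Qed.

Lemma partial_prod_S T :
  partial_prod (S T) = partial_prod T * zeta d a x (S T) (x (S T)).
Proof. unfold partial_prod. rewrite seq_S, map_app, Rprod_app. simpl. ring. Qed.

Lemma NoDup_fresh_inputs T :
  NoDup (map (fun t => map (a t) (seq 1 d)) (filter fresh_neg (seq 1 T))).
Proof.
  induction T as [|T IH]; [constructor|].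
  rewrite seq_S, filter_app, map_app. simpl.
  destruct (fresh_neg (S T)) eqn:Hfresh; simpl; [|rewrite app_nil_r; exact IH].
  apply NoDup_app; [exact IH | repeat constructor; auto |].
  intros v Hv [<- | []]. apply in_map_iff in Hv as [tau [Hkey Htau]].
  apply filter_In in Htau as [Htau Hneg].
  unfold fresh_neg in Hfresh, Hneg.
  apply andb_prop in Hfresh as [_ HA], Hneg as [Hneg _].
  apply negb_true_iff in HA. unfold inA in HA.
  rewrite Nat.sub_succ, Nat.sub_0_r in HA.
  assert (Hseen : existsb (fun tau => negb (x tau) && vec_eqb d (a tau) (a (S T)))
                    (seq 1 T) = true).
  { apply existsb_exists. exists tau. rewrite Hneg, (vec_eqb_map _ _ _ Hkey). auto. }
  congruence.
Qed.

Lemma n_fresh_le T : (n_fresh T <= 2 ^ d)%nat.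
Proof.
  unfold n_fresh. rewrite <- (length_map (fun t => map (a t) (seq 1 d))),
    <- length_bool_lists.
  apply NoDup_incl_length; [apply NoDup_fresh_inputs|].
  intros v Hv. apply in_map_iff in Hv as [t [<- _]].
  apply in_bool_lists. rewrite length_map, length_seq. reflexivity.
Qed.

Section Realizable.

Variable Sstar : nat -> bool.
Hypothesis x_realizable : forall t, x t = h d Sstar (a t).

Lemma positive_not_inA t : x t = true -> inA d a x t = false.
Proof.
  intros Ht. unfold inA. apply not_true_is_false. intros E.
  apply existsb_exists in E as [tau [_ E]]. apply andb_prop in E as [Hneg Heq].
  apply (h_vec_eqb _ Sstar) in Heq. rewrite <- !x_realizable, Ht in Heq.
  rewrite Heq in Hneg. discriminate.
Qed.

(* A negative input violates some i in S*, and every earlier positive input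
   satisfies it, so i is still alive: the round kills it. *)
Lemma negative_kills T : x (S T) = false -> (1 <= n_killed T)%nat.
Proof.
  intros Ht. rewrite x_realizable in Ht.
  destruct (forallb_false_exists _ _ Ht) as [i [Hi Hviol]].
  destruct (Sstar i) eqn:HSi, (a (S T) i) eqn:Hai; try discriminate.
  assert (Hkilled : In i (filter (killed T) (seq 1 d))).
  { apply filter_In. split; [exact Hi|].
    unfold killed, alive. rewrite Hai, andb_true_r.
    apply forallb_forall. intros tau Htau. apply filter_In in Htau as [_ Hpos].
    rewrite x_realizable in Hpos. apply (proj1 (forallb_forall _ _) Hpos) in Hi.
    rewrite HSi in Hi. exact Hi. }
  unfold n_killed. destruct (filter (killed T) (seq 1 d)); simpl in *; [contradiction | lia].
Qed.

Hypothesis alpha_in : 0 < alpha d < 1.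

Definition potential T := (1 - alpha d) ^ (d - n_alive T) * alpha d ^ n_fresh T.

Lemma potential_pos T : 0 < potential T.
Proof. unfold potential. apply Rmult_lt_0_compat; apply pow_lt; lra. Qed.

Lemma potential_S T :
  potential (S T) <= potential T * zeta d a x (S T) (x (S T)).
Proof.
  assert (Hc : 1 - alpha d <> 0) by lra.
  assert (Hk := n_alive_le T). unfold potential, zeta.
  destruct (x (S T)) eqn:Ht.
  - rewrite (zeta1_not_inA _ Hc (positive_not_inA _ Ht)), n_fresh_S.
    unfold fresh_neg. rewrite Ht, Nat.add_0_r.
    replace (d - n_alive (S T))%nat with (d - n_alive T + n_killed T)%nat
      by (rewrite (n_alive_pos T Ht) in Hk |- *; lia).
    rewrite pow_add. right. ring.
  - rewrite n_alive_neg, n_fresh_S by exact Ht. unfold fresh_neg. rewrite Ht.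
    destruct (inA d a x (S T)) eqn:HA; simpl.
    + unfold zeta1. rewrite HA, Nat.add_0_r. right. ring.
    + rewrite (zeta1_not_inA _ Hc HA), Nat.add_1_r.
      assert (Hkill : (1 - alpha d) ^ n_killed T <= (1 - alpha d) ^ 1)
        by (apply pow_le_pow_le1; [lra | apply (negative_kills T Ht)]).
      apply Rle_trans with
        ((1 - alpha d) ^ (d - n_alive T) * alpha d ^ n_fresh T * alpha d);
        [right; simpl; ring | apply Rmult_le_compat_l].
      * apply Rmult_le_pos; apply pow_le; lra.
      * simpl in Hkill. lra.
Qed.

Lemma potential_le_partial_prod T : potential T <= partial_prod T.
Proof.
  induction T as [|T IH].
  - unfold potential, partial_prod. rewrite n_alive_0, Nat.sub_diag. simpl. lra.
  - rewrite partial_prod_S.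
    assert (HS := potential_S T).
    assert (P0 := potential_pos T). assert (P1 := potential_pos (S T)).
    assert (0 < zeta d a x (S T) (x (S T))) by nra.
    apply Rle_trans with (1 := HS). apply Rmult_le_compat_r; lra.
Qed.

Lemma zeta_prod_ge n : (1 - alpha d) ^ d * alpha d ^ (2 ^ d) <= zeta_prod d n a x.
Proof.
  apply Rle_trans with (2 := potential_le_partial_prod n). unfold potential.
  apply Rmult_le_compat; try (apply pow_le; lra);
    apply pow_le_pow_le1; try lra; [lia | apply n_fresh_le].
Qed.

End Realizable.

End Predictor.

Lemma ln2_pos : 0 < ln 2.
Proof. generalize ln_lt_2. lra. Qed.

Lemma log2_mult u v : 0 < u -> 0 < v -> log2 (u * v) = log2 u + log2 v.
Proof.
  intros Hu Hv. unfold log2. rewrite ln_mult by assumption.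
  field. generalize ln2_pos. lra.
Qed.

Lemma log2_pow u k : 0 < u -> log2 (u ^ k) = INR k * log2 u.
Proof. intros Hu. unfold log2. rewrite ln_pow by assumption. unfold Rdiv. ring. Qed.

Lemma log2_le u v : 0 < u -> u <= v -> log2 u <= log2 v.
Proof.
  intros Hu Huv. unfold log2, Rdiv. apply Rmult_le_compat_r.
  - apply Rlt_le, Rinv_0_lt_compat, ln2_pos.
  - destruct Huv as [Hlt | ->]; [left; apply ln_increasing |]; lra.
Qed.

Lemma alpha_exp d : alpha d = exp (- (INR d / 2 ^ d * ln 2)).
Proof. unfold alpha, Rpower. f_equal. field. apply pow_nonzero. lra. Qed.

Lemma log2_alpha d : log2 (alpha d) = - (INR d / 2 ^ d).
Proof.
  unfold log2. rewrite alpha_exp, ln_exp.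
  field. split; [apply pow_nonzero; lra | generalize ln2_pos; lra].
Qed.

Lemma INR_le_two_pow d : INR d <= 2 ^ d.
Proof.
  induction d as [|d IH]; [simpl; lra|]. rewrite S_INR. simpl.
  assert (1 <= 2 ^ d) by (apply pow_R1_Rle; lra). lra.
Qed.

Lemma alpha_in_01 d : (1 <= d)%nat -> 0 < alpha d < 1.
Proof.
  intros Hd. rewrite alpha_exp. split; [apply exp_pos|].
  rewrite <- exp_0. apply exp_increasing.
  assert (0 < INR d) by (apply lt_0_INR; lia).
  assert (0 < 2 ^ d) by (apply pow_lt; lra).
  assert (0 < INR d / 2 ^ d) by (apply Rdiv_lt_0_compat; lra).
  generalize ln2_pos. nra.
Qed.

(* 1 - e^(-z) >= z / (1 + z) >= z / 2 for z = d ln 2 / 2^d in (0, 1). *)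
Lemma one_minus_alpha_ge d : (2 <= d)%nat -> 2 / (2 ^ d) ^ 2 <= 1 - alpha d.
Proof.
  intros Hd. rewrite alpha_exp.
  assert (Hln2 := ln_lt_2). assert (Hln2' : ln 2 < 1).
  { rewrite <- ln_exp with 1. apply ln_increasing; [lra|].
    generalize (exp_ineq1 1 ltac:(lra)). lra. }
  assert (Hp : 4 <= 2 ^ d) by (replace 4 with (2 ^ 2) by lra; apply Rle_pow; lra || lia).
  assert (HdR : 2 <= INR d) by (replace 2 with (INR 2) by (simpl; lra); apply le_INR; lia).
  assert (Hdp := INR_le_two_pow d).
  set (p := 2 ^ d) in *. set (z := INR d / p * ln 2).
  assert (Hzp : z * p = INR d * ln 2) by (unfold z; field; lra).
  assert (Hz : 0 < z < 1) by (split; nra).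
  assert (Hexp := exp_ineq1 z ltac:(lra)).
  rewrite exp_Ropp.
  assert (/ exp z <= / (1 + z)) by (apply Rinv_le_contravar; lra).
  assert (Hfrac : z / 2 <= 1 - / (1 + z)).
  { replace (1 - / (1 + z)) with (z / (1 + z)) by (field; lra).
    unfold Rdiv. apply Rmult_le_compat_l; [lra | apply Rinv_le_contravar; lra]. }
  assert (2 / p ^ 2 <= z / 2).
  { apply (Rmult_le_reg_r (2 * p ^ 2)); [nra|].
    replace (2 / p ^ 2 * (2 * p ^ 2)) with 4 by (field; lra).
    replace (z / 2 * (2 * p ^ 2)) with (INR d * ln 2 * p) by (rewrite <- Hzp; field).
    assert (1 <= INR d * ln 2) by nra. nra. }
  lra.
Qed.

Lemma log2_lower_bound d : (2 <= d)%nat ->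
  - (2 * INR d ^ 2) <= log2 ((1 - alpha d) ^ d * alpha d ^ (2 ^ d)).
Proof.
  intros Hd. destruct (alpha_in_01 d ltac:(lia)) as [Ha0 Ha1].
  assert (Hp : 0 < 2 ^ d) by (apply pow_lt; lra).
  rewrite log2_mult, !log2_pow, log2_alpha, pow_INR by (try apply pow_lt; lra).
  replace (INR 2) with 2 by (simpl; lra).
  assert (Hb : log2 (2 / (2 ^ d) ^ 2) <= log2 (1 - alpha d))
    by (apply log2_le, one_minus_alpha_ge; [apply Rdiv_lt_0_compat; nra | lia]).
  replace (log2 (2 / (2 ^ d) ^ 2)) with (1 - 2 * INR d) in Hb.
  2:{ unfold log2, Rdiv. rewrite ln_mult, ln_Rinv, !ln_pow
        by (try apply Rinv_0_lt_compat; repeat apply pow_lt; lra).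
      simpl INR. field. generalize ln2_pos. lra. }
  assert (HdR : 0 <= INR d) by apply pos_INR.
  replace (2 ^ d * - (INR d / 2 ^ d)) with (- INR d) by (field; lra).
  nra.
Qed.

Theorem theorem4 (d n : nat) (S : nat -> bool) (a : nat -> nat -> bool) :
  (2 <= d)%nat -> (1 <= n)%nat ->
  let x := fun t => h d S (a t) in
  0 < zeta_prod d n a x /\ logloss d n a x <= 2 * INR d ^ 2.
Proof.
  intros Hd _ x.
  destruct (alpha_in_01 d ltac:(lia)) as [Ha0 Ha1].
  assert (Hlow := zeta_prod_ge d a x S (fun t => eq_refl) (conj Ha0 Ha1) n).
  assert (Hpos : 0 < (1 - alpha d) ^ d * alpha d ^ (2 ^ d))
    by (apply Rmult_lt_0_compat; apply pow_lt; lra).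
  split; [lra|].
  assert (Hlog := log2_le _ _ Hpos Hlow).
  assert (Hbound := log2_lower_bound d Hd).
  unfold logloss. lra.
Qed.
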